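(* Fix $k$ and let $C(m)=\binom{2m}{m+k}$ and $C_L(m)=\frac{1}{4^m}\binom{2m}{m+k}$, regarded as functions of $m$. For $j\ge1$ let $$\Delta_j(m)=(-1)^j\big[2^j\psi^{(j-1)}(2m+1)-\psi^{(j-1)}(m+1+k)-\psi^{(j-1)}(m+1-k)\big],$$ and define $x_0(m)=1$, $x_1(m)=0$, and $x_j(m)=\sum_{l=0}^{j-2}\binom{j-1}{l}\Delta_{j-l}(m)x_l(m)$ for $j\ge2$. Then for every $p\in\mathbb{N}_0$ and every $m$ at which these quantities are defined, $$C^{(p)}(m)=(-1)^p\binom{2m}{m+k}\sum_{i=0}^{p}\binom{p}{i}\Delta_1(m)^{p-i}x_i(m)$$ and $$C_L^{(p)}(m)=(-1)^p\binom{2m}{m+k}\sum_{i=0}^{p}\binom{p}{i}\big(\Delta_1(m)+\log 4\big)^{p-i}x_i(m).$$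
   Context: The binomial coefficient is defined via the gamma function: $\binom{2m}{m+k}=\frac{\Gamma(2m+1)}{\Gamma(m+k+1)\Gamma(m-k+1)}$. $\psi^{(n)}(z)=\frac{d^{n+1}}{dz^{n+1}}\log\Gamma(z)$ is the polygamma function. The identities are asserted at values of $m$ where none of $2m+1$, $m+1+k$, $m+1-k$ is a non-positive integer, so that all gamma and polygamma values involved are finite. *)

From Stdlib Require Import Reals Factorial.
From Coquelicot Require Import Coquelicot.
Open Scope R_scope.

(* Euler's Gamma function via the Gauss limit formula
     Gamma(x) = lim_{n->oo} n! n^x / (x (x+1) ... (x+n)),
   valid (and the standard definition) for every real x that is not a
   non-positive integer. *)
Fixpoint poch (x : R) (n : nat) : R :=
  match n with
  | O => x
  | S n' => poch x n' * (x + INR (S n'))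
  end.

Definition gauss_term (x : R) (n : nat) : R :=
  INR (fact n) * Rpower (INR n) x
  / poch x n.

Definition Gamma (x : R) : R := real (Lim_seq (gauss_term x)).

(* Polygamma psi^(n)(z) = d^(n+1)/dz^(n+1) log Gamma(z);
   log |Gamma| has the same derivatives as log Gamma (where Gamma < 0 the
   real logarithm of Gamma is taken as log|Gamma|). *)
Definition polygamma (n : nat) (z : R) : R :=
  Derive_n (fun t => ln (Rabs (Gamma t))) (S n) z.

Definition binomR (a b : R) : R :=
  Gamma (a + 1) / (Gamma (b + 1) * Gamma (a - b + 1)).

Definition Delta_j (k m : R) (j : nat) : R :=
  (-1) ^ j * (2 ^ j * polygamma (j - 1) (2 * m + 1)
              - polygamma (j - 1) (m + 1 + k)
              - polygamma (j - 1) (m + 1 - k)).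

Fixpoint xaux (D : nat -> R) (fuel j : nat) {struct fuel} : R :=
  match fuel with
  | O => 1
  | S f =>
      match j with
      | O => 1
      | S O => 0
      | S (S j') =>
          sum_n (fun l => Binomial.C (S j') l * D (S (S j') - l)%nat * xaux D f l) j'
      end
  end.

Definition xseq (D : nat -> R) (j : nat) : R := xaux D j j.

Definition Cfun (k : R) (t : R) : R := binomR (2 * t) (t + k).
Definition CLfun (k : R) (t : R) : R := binomR (2 * t) (t + k) / Rpower 4 t.

(* Near any point that is not a non-positive integer, the Gauss product gives
   [Gamma = s * exp Lambda] with [s = 1] or [-1] and
   [Lambda x = sum_j (x ln (1 + 1/j) - ln |x + j| + ln j)]; the termwise derivatives of
   each order are O(1/j^2) uniformly on a small ball, so the series may be differentiated
   termwise and [polygamma n = Lambda^(n+1)].  Hence [C = s' * exp L] near m with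
   [L t = Lambda (2t+1) - Lambda (t+1+k) - Lambda (t+1-k)] and [L^(j) (m) = (-1)^j Delta_j].
   Writing [L t = L m - Delta_1 (t - m) + M t] with [M' m = 0], Leibniz' rule applied to
   [exp (M t) * exp (- Delta_1 (t - m))] gives the formula, because the derivatives of
   [exp M] at m obey exactly the recursion defining [x_j].  For [C_L] replace [L] by
   [L - t ln 4]. *)

From Stdlib Require Import Reals Factorial Lra Lia.
From Coquelicot Require Import Coquelicot.
Open Scope R_scope.

(* Coquelicot states its algebra with [plus]/[mult] of the canonical structures;
   [change] exposes the plain real equation to [ring]/[field]. *)
Ltac Rring := match goal with |- ?a = ?b => change (@eq R a b) end;
  repeat change (mult ?x ?y) with (x * y); repeat change (plus ?x ?y) with (x + y); ring.

Lemma is_derive_eq (f : R -> R) (x l l' : R) : is_derive f x l -> l = l' -> is_derive f x l'.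
Proof. now intros H <-. Qed.

Lemma is_derive_Rmult (f g : R -> R) x df dg :
  is_derive f x df -> is_derive g x dg ->
  is_derive (fun t => f t * g t) x (df * g x + f x * dg).
Proof. intros Hf Hg. apply (is_derive_mult f g x df dg Hf Hg). intros; apply Rmult_comm. Qed.

Lemma is_derive_Rplus (f g : R -> R) x df dg :
  is_derive f x df -> is_derive g x dg ->
  is_derive (fun t => f t + g t) x (df + dg).
Proof. exact (is_derive_plus f g x df dg). Qed.

Lemma is_derive_Rminus (f g : R -> R) x df dg :
  is_derive f x df -> is_derive g x dg ->
  is_derive (fun t => f t - g t) x (df - dg).
Proof. exact (is_derive_minus f g x df dg). Qed.

Lemma is_derive_Rcomp (f g : R -> R) x df dg :
  is_derive f (g x) df -> is_derive g x dg ->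
  is_derive (fun t => f (g t)) x (dg * df).
Proof. exact (is_derive_comp f g x df dg). Qed.

Lemma is_derive_affine (a b x : R) : is_derive (fun t => a * t + b) x a.
Proof. auto_derive; [easy | ring]. Qed.

Lemma sum_n_Sn_shift (w : nat -> R) (N : nat) :
  sum_n w (S N) = w O + sum_n (fun i => w (S i)) N.
Proof.
  unfold sum_n. rewrite sum_Sn_m by lia. now rewrite <- sum_n_m_S.
Qed.

(* [Binomial.C N (S N)] is not 0 (real division of factorials), so the two boundary
   terms are split off before Pascal's rule is used. *)
Lemma sum_n_binomial_pascal (f g : nat -> R) (N : nat) :
  sum_n (fun i => Binomial.C N i * (f (S i) * g (N - i)%nat + f i * g (S (N - i)))) N
  = sum_n (fun i => Binomial.C (S N) i * f i * g (S N - i)%nat) (S N).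
Proof.
  set (w := fun i => match i with O => 0 | S i' => Binomial.C N i' * f i * g (S N - i)%nat end).
  set (v := fun i => if (i <=? N)%nat then Binomial.C N i * f i * g (S N - i)%nat else 0).
  transitivity (sum_n w (S N) + sum_n v (S N)).
  - rewrite sum_n_Sn_shift, sum_Sn.
    unfold v at 2. replace (S N <=? N)%nat with false by (symmetry; apply Nat.leb_gt; lia).
    change (plus (sum_n v N) 0) with (sum_n v N + 0).
    simpl (w O). rewrite Rplus_0_l, Rplus_0_r.
    change (sum_n (fun i => w (S i)) N + sum_n v N) with
      (plus (sum_n (fun i => w (S i)) N) (sum_n v N)).
    rewrite <- sum_n_plus.
    apply sum_n_ext_loc. intros i Hi. unfold w, v.
    replace (i <=? N)%nat with true by (symmetry; apply Nat.leb_le; lia).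
    replace (S N - S i)%nat with (N - i)%nat by lia.
    replace (S N - i)%nat with (S (N - i)) by lia.
    cbn -[Binomial.C]. Rring.
  - transitivity (sum_n (fun i => w i + v i) (S N)); [symmetry; exact (sum_n_plus w v (S N))|].
    apply sum_n_ext_loc. intros [|i] Hi; unfold w, v; change (@plus R_AbelianMonoid) with Rplus.
    + simpl (0 <=? N)%nat. rewrite !C_n_0. Rring.
    + destruct (Nat.eq_dec i N) as [->|Hne].
      * replace (S N <=? N)%nat with false by (symmetry; apply Nat.leb_gt; lia).
        rewrite !C_n_n. Rring.
      * replace (S i <=? N)%nat with true by (symmetry; apply Nat.leb_le; lia).
        rewrite <- pascal by lia. Rring.
Qed.

Lemma is_derive_sum_binomial_product (f g : nat -> R -> R) N x :
  (forall i, (i <= N)%nat -> is_derive (f i) x (f (S i) x)) ->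
  (forall i, (i <= N)%nat -> is_derive (g i) x (g (S i) x)) ->
  is_derive (fun t => sum_n (fun i => Binomial.C N i * f i t * g (N - i)%nat t) N) x
    (sum_n (fun i => Binomial.C (S N) i * f i x * g (S N - i)%nat x) (S N)).
Proof.
  intros Hf Hg.
  rewrite <- (sum_n_binomial_pascal (fun i => f i x) (fun i => g i x)).
  apply (is_derive_sum_n (K := R_AbsRing) (V := R_NormedModule)
    (fun i t => Binomial.C N i * f i t * g (N - i)%nat t)). intros i Hi.
  apply (is_derive_ext (fun t => Binomial.C N i * (f i t * g (N - i)%nat t))).
  { intros t. Rring. }
  apply is_derive_scal, is_derive_Rmult; [apply Hf | apply Hg]; lia.
Qed.

Definition is_derive_tower (f : nat -> R -> R) (U : R -> Prop) :=
  forall n x, U x -> is_derive (f n) x (f (S n) x).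

Lemma Derive_n_tower f U : open U -> is_derive_tower f U ->
  forall n x, U x -> Derive_n (f O) n x = f n x.
Proof.
  intros HU Hf n. induction n as [|n IH]; intros x Hx; [reflexivity|].
  simpl. rewrite (Derive_ext_loc _ (f n)).
  - apply is_derive_unique, Hf, Hx.
  - apply (locally_open U); auto.
Qed.

Lemma is_derive_tower_minus f g U : is_derive_tower f U -> is_derive_tower g U ->
  is_derive_tower (fun n t => f n t - g n t) U.
Proof. intros Hf Hg n x Hx. apply is_derive_Rminus; auto. Qed.

Lemma is_derive_tower_leibniz f g U : is_derive_tower f U -> is_derive_tower g U ->
  is_derive_tower (fun n t => sum_n (fun i => Binomial.C n i * f i t * g (n - i)%nat t) n) U.
Proof.
  intros Hf Hg n x Hx.
  eapply is_derive_ext; [|apply is_derive_sum_binomial_product; intros; [apply Hf|apply Hg]; auto].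
  intros t. apply sum_n_ext_loc. intros i Hi. Rring.
Qed.

Lemma is_derive_tower_comp_affine f U V a b : is_derive_tower f U ->
  (forall t, V t -> U (a * t + b)) ->
  is_derive_tower (fun n t => a ^ n * f n (a * t + b)) V.
Proof.
  intros Hf HV n x Hx. apply (is_derive_eq _ _ (a ^ n * (a * f (S n) (a * x + b)))).
  - apply is_derive_scal, (is_derive_Rcomp (f n) (fun t => a * t + b)).
    + apply Hf, HV, Hx.
    + apply is_derive_affine.
  - simpl. Rring.
Qed.

Lemma is_derive_tower_comp_shift f U V b : is_derive_tower f U ->
  (forall t, V t -> U (t + b)) -> is_derive_tower (fun n t => f n (t + b)) V.
Proof.
  intros Hf HV n x Hx. apply (is_derive_eq _ _ (1 * f (S n) (x + b))).
  - apply (is_derive_Rcomp (f n) (fun t => t + b)); [apply Hf, HV, Hx | auto_derive; [easy | ring]].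
  - ring.
Qed.

Lemma is_derive_tower_exp_linear (a c : R) U :
  is_derive_tower (fun n t => a ^ n * exp (a * (t - c))) U.
Proof. intros n x _. auto_derive; [easy | unfold Rminus; simpl; ring]. Qed.

Definition linear_tower (a c : R) (n : nat) (t : R) : R :=
  match n with O => a * (t - c) | S O => a | _ => 0 end.

Lemma is_derive_tower_linear a c U : is_derive_tower (linear_tower a c) U.
Proof. intros [|[|n]] x _; unfold linear_tower; auto_derive; easy || ring. Qed.

(* The fuel argument only makes the strong recursion structural. *)
Fixpoint exp_tower_fuel (M : nat -> R -> R) (fuel n : nat) (t : R) : R :=
  match fuel, n with
  | S f, S n' => sum_n (fun l => Binomial.C n' l * exp_tower_fuel M f l t * M (S (n' - l)) t) n'
  | _, _ => exp (M O t)
  end.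

Definition exp_tower M n t := exp_tower_fuel M n n t.

Lemma exp_tower_fuel_enough M : forall f1 f2 n t, (n <= f1)%nat -> (n <= f2)%nat ->
  exp_tower_fuel M f1 n t = exp_tower_fuel M f2 n t.
Proof.
  induction f1 as [|f1 IH]; intros [|f2] [|n] t H1 H2; try reflexivity; try lia.
  simpl. apply sum_n_ext_loc. intros l Hl. rewrite (IH f2 l t) by lia. reflexivity.
Qed.

Lemma exp_tower_S M n t : exp_tower M (S n) t =
  sum_n (fun l => Binomial.C n l * exp_tower M l t * M (S (n - l)) t) n.
Proof.
  unfold exp_tower. simpl. apply sum_n_ext_loc. intros l Hl.
  rewrite (exp_tower_fuel_enough M n l l t) by lia. reflexivity.
Qed.

Lemma is_derive_tower_exp M U : is_derive_tower M U -> is_derive_tower (exp_tower M) U.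
Proof.
  intros HM n. induction n as [n IH] using (well_founded_induction Wf_nat.lt_wf).
  intros x Hx. destruct n as [|n].
  - apply (is_derive_eq _ _ (M 1%nat x * exp (M O x))).
    + apply (is_derive_Rcomp exp (M O)); [apply is_derive_exp | apply HM, Hx].
    + rewrite exp_tower_S, sum_O. unfold exp_tower. simpl. rewrite C_n_0. Rring.
  - eapply is_derive_ext. { intros t. symmetry. apply exp_tower_S. }
    rewrite exp_tower_S.
    apply (is_derive_sum_binomial_product (exp_tower M) (fun j => M (S j)) n x).
    + intros i Hi. apply IH; [lia | exact Hx].
    + intros i Hi. apply HM, Hx.
Qed.

Lemma xaux_fuel_enough D : forall f1 f2 n, (n <= f1)%nat -> (n <= f2)%nat ->
  xaux D f1 n = xaux D f2 n.
Proof.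
  induction f1 as [|f1 IH]; intros [|f2] [|[|n]] H1 H2; try reflexivity; try lia.
  simpl. apply sum_n_ext_loc. intros l Hl. rewrite (IH f2 l) by lia. reflexivity.
Qed.

Lemma xseq_SS D j : xseq D (S (S j)) =
  sum_n (fun l => Binomial.C (S j) l * D (S (S j) - l)%nat * xseq D l) j.
Proof.
  unfold xseq.
  change (xaux D (S (S j)) (S (S j))) with
    (sum_n (fun l => Binomial.C (S j) l * D (S (S j) - l)%nat * xaux D (S j) l) j).
  apply sum_n_ext_loc. intros l Hl.
  rewrite (xaux_fuel_enough D (S j) l l) by lia. reflexivity.
Qed.

Lemma pow_m1_split n i : (i <= n)%nat -> (-1) ^ i * (-1) ^ (n - i) = (-1) ^ n.
Proof. intros H. rewrite <- pow_add. f_equal. lia. Qed.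

Lemma exp_tower_critical M m (Dl : nat -> R) : M 1%nat m = 0 ->
  (forall j, (2 <= j)%nat -> M j m = (-1) ^ j * Dl j) ->
  forall n, exp_tower M n m = exp (M O m) * ((-1) ^ n * xseq Dl n).
Proof.
  intros H1 Hj n. induction n as [n IH] using (well_founded_induction Wf_nat.lt_wf).
  destruct n as [|[|j]].
  - unfold exp_tower, xseq. simpl. ring.
  - rewrite exp_tower_S, sum_O. unfold exp_tower, xseq. simpl. rewrite H1. ring.
  - rewrite exp_tower_S, sum_Sn, xseq_SS.
    replace (S j - S j)%nat with O by lia. rewrite H1.
    change (plus ?a ?b) with (a + b). rewrite Rmult_0_r, Rplus_0_r.
    rewrite <- !(sum_n_mult_l (K := R_Ring)).
    apply sum_n_ext_loc. intros l Hl.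
    rewrite IH by lia.
    replace (S (S j - l)) with (S (S j) - l)%nat by lia.
    rewrite (Hj (S (S j) - l)%nat) by lia.
    rewrite <- (pow_m1_split (S (S j)) l) by lia. Rring.
Qed.

(* Split [L O t = L O m - D1 (t - m) + M O t] with [M' (m) = 0]; Leibniz' rule for
   [exp (M O t) * exp (- D1 (t - m))] then produces the binomial sum. *)
Lemma Derive_n_scaled_exp (f : R -> R) (s : R) (L : nat -> R -> R) U m p
    (Dl : nat -> R) D1 :
  open U -> U m -> is_derive_tower L U -> (forall t, U t -> f t = s * exp (L O t)) ->
  L 1%nat m = - D1 -> (forall j, (2 <= j)%nat -> L j m = (-1) ^ j * Dl j) ->
  Derive_n f p m =
    (-1) ^ p * f m * sum_n (fun i => Binomial.C p i * D1 ^ (p - i) * xseq Dl i) p.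
Proof.
  intros HU Hm HL Hf H1 Hj.
  set (M := fun n t => L n t - linear_tower (- D1) m n t).
  set (P := fun n t => (- D1) ^ n * exp (- D1 * (t - m))).
  assert (HP : is_derive_tower P U) by apply is_derive_tower_exp_linear.
  assert (HMP := is_derive_tower_leibniz _ _ U
    (is_derive_tower_exp M U (is_derive_tower_minus _ _ U HL (is_derive_tower_linear _ _ U)))
    HP).
  assert (HD := Derive_n_tower _ U HU HMP p m Hm). cbv beta in HD.
  rewrite (Derive_n_ext_loc _ (fun t => s * sum_n
             (fun i => Binomial.C O i * exp_tower M i t * P (O - i)%nat t) O)).
  2:{ apply (locally_open U); [exact HU | | exact Hm]. intros t Ht.
      rewrite Hf, sum_O by exact Ht. unfold P, M, exp_tower. simpl. unfold linear_tower.
      rewrite C_n_0, !Rmult_1_l, <- exp_plus. do 2 f_equal. ring. }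
  rewrite Derive_n_scal_l, HD, Hf by exact Hm.
  rewrite <- !(sum_n_mult_l (K := R_Ring)).
  apply sum_n_ext_loc. intros i Hi.
  rewrite (exp_tower_critical M m Dl).
  2:{ unfold M, linear_tower. rewrite H1. ring. }
  2:{ intros j Hj2. unfold M, linear_tower. destruct j as [|[|j]]; try lia.
      rewrite Hj by lia. ring. }
  replace (M O m) with (L O m) by (unfold M, linear_tower; ring).
  unfold P. replace (m - m) with 0 by ring. rewrite Rmult_0_r, exp_0.
  rewrite <- (pow_m1_split p i Hi).
  replace (- D1) with ((-1) * D1) by ring. rewrite Rpow_mult_distr. Rring.
Qed.

Lemma is_derive_continuity_pt (f : R -> R) x l : is_derive f x l -> continuity_pt f x.
Proof.
  intros H. apply continuity_pt_filterlim, (ex_derive_continuous f x). now exists l.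
Qed.

Lemma Rabs_le_between x a : Rabs x <= a -> - a <= x <= a.
Proof. unfold Rabs; destruct (Rcase_abs x); intros; split; lra. Qed.

Lemma ln_1p_sub_le u : Rabs u <= / 2 -> Rabs (ln (1 + u) - u) <= 2 * u ^ 2.
Proof.
  intros Hu. apply Rabs_le_between in Hu.
  assert (Hd : forall v, -/2 <= v <= /2 -> is_derive (fun v => ln (1 + v) - v) v (- v / (1 + v))).
  { intros v Hv. auto_derive; [lra | field; lra]. }
  assert (Hin : forall v, Rmin 0 u <= v <= Rmax 0 u -> -/2 <= v <= /2).
  { intros v. unfold Rmin, Rmax. destruct (Rle_dec 0 u); lra. }
  destruct (MVT_gen (fun v => ln (1 + v) - v) 0 u (fun v => - v / (1 + v))) as [c [Hc Heq]].
  - intros x Hx. apply Hd, Hin. lra.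
  - intros x Hx. eapply is_derive_continuity_pt, Hd, Hin, Hx.
  - rewrite Rplus_0_r, ln_1, !Rminus_0_r in Heq.
    assert (Hcu : Rabs c <= Rabs u) by (revert Hc; unfold Rmin, Rmax, Rabs;
      destruct (Rle_dec 0 u), (Rcase_abs c), (Rcase_abs u); lra).
    assert (Hc2 := Hin c Hc).
    rewrite Heq, Rabs_mult, Rabs_div, Rabs_Ropp, (Rabs_right (1 + c)) by lra.
    rewrite <- (pow2_abs u).
    assert (Rabs c / (1 + c) <= 2 * Rabs u).
    { apply (Rmult_le_reg_r (1 + c)); [lra|]. field_simplify; [|lra].
      pose proof (Rabs_pos c). nra. }
    pose proof (Rabs_pos u). nra.
Qed.

Lemma sum_n_m_inv_sqr_le m n : (1 <= m)%nat -> (m <= n)%nat ->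
  sum_n_m (fun j => / INR j ^ 2) (S m) n <= / INR m - / INR n.
Proof.
  intros Hm. induction n as [|n IH]; intros Hn; [lia|].
  destruct (Nat.eq_dec m (S n)) as [->|Hne].
  - rewrite sum_n_m_zero by lia. change zero with 0. lra.
  - rewrite sum_n_Sm by lia. change (plus ?a ?b) with (a + b).
    assert (H1 : 1 <= INR n) by (apply (le_INR 1); lia).
    specialize (IH ltac:(lia)). rewrite S_INR in *.
    assert (/ (INR n + 1) ^ 2 <= / INR n - / (INR n + 1)).
    { replace (/ INR n - / (INR n + 1)) with (/ (INR n * (INR n + 1))) by (field; lra).
      apply Rinv_le_contravar; nra. }
    lra.
Qed.

Lemma sum_n_m_le_loc (a b : nat -> R) n m :
  (forall k, (n <= k <= m)%nat -> a k <= b k) -> sum_n_m a n m <= sum_n_m b n m.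
Proof.
  intros H. destruct (Compare_dec.le_lt_dec n m) as [Hnm|Hnm].
  2:{ rewrite !sum_n_m_zero by lia. lra. }
  induction m as [|m IH].
  - replace n with O by lia. rewrite !sum_n_n. apply H; lia.
  - destruct (Nat.eq_dec n (S m)) as [->|Hne].
    + rewrite !sum_n_n. apply H; lia.
    + rewrite !sum_n_Sm by lia.
      apply Rplus_le_compat; [apply IH|apply H]; intros; try apply H; lia.
Qed.

Lemma CVU_cauchy_inv_sqr_bound (a : nat -> R -> R) (D : R -> Prop) K J :
  0 <= K -> (1 <= J)%nat ->
  (forall j x, (J <= j)%nat -> D x -> Rabs (a j x) <= K / INR j ^ 2) ->
  CVU_cauchy (fun n x => sum_n (fun j => a j x) n) D.
Proof.
  intros HK HJ Hb eps.
  destruct (INR_unbounded (K / eps)) as [N0 HN0].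
  set (N := max J (S N0)).
  assert (HN : 0 < INR N /\ K / eps < INR N).
  { split; [apply lt_0_INR; lia|]. apply (Rlt_le_trans _ (INR N0)); [lra|]. apply le_INR; lia. }
  assert (Htail : forall p q x, D x -> (N <= p <= q)%nat ->
     Rabs (sum_n (fun j => a j x) q - sum_n (fun j => a j x) p) < eps).
  { intros p q x Hx Hpq.
    destruct (Nat.eq_dec p q) as [->|Hne].
    { rewrite Rminus_diag, Rabs_R0. apply cond_pos. }
    assert (Hp : INR N <= INR p) by (apply le_INR; lia).
    assert (0 < / INR q) by (apply Rinv_0_lt_compat, lt_0_INR; lia).
    rewrite <- (sum_n_m_sum_n (G := R_AbelianGroup)) by lia.
    eapply Rle_lt_trans; [apply (norm_sum_n_m (K := R_AbsRing) (V := R_NormedModule))|].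
    eapply Rle_lt_trans; [apply (sum_n_m_le_loc _ (fun j => K * / INR j ^ 2))|].
    { intros j Hj. apply Hb; [lia | exact Hx]. }
    rewrite (sum_n_m_mult_l (K := R_Ring) K (fun j => / INR j ^ 2)).
    change (mult K ?b) with (K * b).
    eapply Rle_lt_trans; [apply Rmult_le_compat_l, sum_n_m_inv_sqr_le; [exact HK | lia | lia]|].
    apply (Rle_lt_trans _ (K / INR N)).
    - unfold Rdiv. apply Rmult_le_compat_l; [exact HK|].
      assert (/ INR p <= / INR N) by (apply Rinv_le_contravar; lra). lra.
    - assert (Heps := cond_pos eps).
      apply (Rmult_lt_reg_r (INR N / eps)); [apply Rdiv_lt_0_compat; lra|].
      replace (K / INR N * (INR N / eps)) with (K / eps) by (field; lra).
      replace (eps * (INR N / eps)) with (INR N) by (field; lra). lra. }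
  exists N. intros n m x Hx Hn Hm.
  destruct (Compare_dec.le_lt_dec m n).
  - apply Htail; [exact Hx | lia].
  - rewrite Rabs_minus_sym. apply Htail; [exact Hx | lia].
Qed.

(* Terms of the series for [ln |Gamma|] read off the Gauss product, and their
   derivatives.  Junk values [/ 0 = 0] and [ln 0 = 0] make the [j = 0] term [- ln |x|]. *)
Definition log_gamma_term (k j : nat) (x : R) : R :=
  match k with
  | O => x * ln (1 + / INR j) - ln (Rabs (x + INR j)) + ln (INR j)
  | S O => ln (1 + / INR j) - / (x + INR j)
  | S (S k') => (-1) ^ k * INR (fact (S k')) * (/ (x + INR j)) ^ k
  end.

Definition log_gamma_partial (k n : nat) (x : R) : R := sum_n (fun j => log_gamma_term k j x) n.

Lemma is_derive_ln_Rabs y : y <> 0 -> is_derive (fun t => ln (Rabs t)) y (/ y).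
Proof.
  intros Hy. apply (is_derive_eq _ _ ((sign y * 1) * / Rabs y)).
  - apply (is_derive_Rcomp ln (fun t => Rabs t)).
    + apply is_derive_ln, Rabs_pos_lt, Hy.
    + apply (is_derive_Rabs (fun t => t)); [apply (is_derive_id (K := R_AbsRing)) | exact Hy].
  - destruct (Rlt_or_le 0 y) as [H|H].
    + rewrite sign_eq_1, Rabs_right by lra. field. lra.
    + rewrite sign_eq_m1, Rabs_left by lra. field. lra.
Qed.

Lemma is_derive_inv_shift (c x : R) : x + c <> 0 ->
  is_derive (fun t => / (t + c)) x (- (/ (x + c)) ^ 2).
Proof. intros H. auto_derive; [exact H | field; exact H]. Qed.

Lemma is_derive_log_gamma_term k j x : x + INR j <> 0 ->
  is_derive (log_gamma_term k j) x (log_gamma_term (S k) j x).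
Proof.
  intros H. destruct k as [|[|k]]; cbn beta iota delta [log_gamma_term].
  - apply (is_derive_eq _ _ (ln (1 + / INR j) - 1 * / (x + INR j) + 0)).
    + apply is_derive_Rplus; [apply is_derive_Rminus | auto_derive; [easy | ring]].
      * auto_derive; [easy | ring].
      * apply (is_derive_Rcomp (fun t => ln (Rabs t)) (fun t => t + INR j)).
        -- apply is_derive_ln_Rabs, H.
        -- auto_derive; [easy | ring].
    + Rring.
  - apply (is_derive_eq _ _ (0 - - (/ (x + INR j)) ^ 2)).
    + apply is_derive_Rminus; [auto_derive; [easy | ring] | apply is_derive_inv_shift, H].
    + simpl. Rring.
  - set (u := / (x + INR j)).
    apply (is_derive_eq _ _ ((-1) ^ S (S k) * INR (fact (S k)) *
       (INR (S (S k)) * (- u ^ 2) * u ^ Nat.pred (S (S k))))).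
    + apply is_derive_scal, (is_derive_pow (fun t => / (t + INR j))).
      apply is_derive_inv_shift, H.
    + change (fact (S (S k))) with (S (S k) * fact (S k))%nat.
      rewrite mult_INR. simpl pow. simpl Nat.pred. Rring.
Qed.

Lemma is_derive_log_gamma_partial k n x : (forall j, x + INR j <> 0) ->
  is_derive (log_gamma_partial k n) x (log_gamma_partial (S k) n x).
Proof.
  intros H. apply (is_derive_sum_n (K := R_AbsRing) (V := R_NormedModule)
    (fun j t => log_gamma_term k j t)).
  intros j _. apply is_derive_log_gamma_term, H.
Qed.

Section TermBounds.

Variables (R0 : R) (j : nat) (x : R).
Hypotheses (HR0 : 1 <= R0) (Hj : 2 * R0 + 2 <= INR j) (Hx : Rabs x <= R0).

Let Hx_between : - R0 <= x <= R0 := Rabs_le_between x R0 Hx.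

Let Hinv_small : Rabs (/ INR j) <= / 2.
Proof.
  rewrite Rabs_right by (apply Rle_ge, Rlt_le, Rinv_0_lt_compat; lra).
  apply Rinv_le_contravar; lra.
Qed.

Let Hdiv_small : Rabs (x / INR j) <= / 2.
Proof.
  unfold Rdiv.
  rewrite Rabs_mult, (Rabs_right (/ INR j)) by (apply Rle_ge, Rlt_le, Rinv_0_lt_compat; lra).
  apply (Rmult_le_reg_r (INR j)); [lra|]. rewrite Rmult_assoc, Rinv_l by lra. lra.
Qed.

Lemma log_gamma_term0_bound :
  Rabs (log_gamma_term 0 j x) <= (2 * R0 + 2 * R0 ^ 2) / INR j ^ 2.
Proof.
  cbn beta iota delta [log_gamma_term].
  rewrite (Rabs_right (x + INR j)) by lra.
  replace (x + INR j) with (INR j * (1 + x / INR j)) by (field; lra).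
  pose proof (Rabs_le_between _ _ Hdiv_small).
  rewrite ln_mult by lra.
  replace (x * ln (1 + / INR j) - (ln (INR j) + ln (1 + x / INR j)) + ln (INR j))
    with (x * (ln (1 + / INR j) - / INR j) - (ln (1 + x / INR j) - x / INR j))
    by (field; lra).
  pose proof (ln_1p_sub_le _ Hinv_small) as B1. pose proof (ln_1p_sub_le _ Hdiv_small) as B2.
  replace ((/ INR j) ^ 2) with (1 / INR j ^ 2) in B1 by (field; lra).
  replace ((x / INR j) ^ 2) with (x ^ 2 / INR j ^ 2) in B2 by (field; lra).
  assert (0 < / INR j ^ 2) by (apply Rinv_0_lt_compat, pow_lt; lra).
  assert (x ^ 2 <= R0 ^ 2) by nra.
  eapply Rle_trans; [apply Rabs_triang|]. rewrite Rabs_Ropp, Rabs_mult.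
  unfold Rdiv in *. pose proof (Rabs_pos x). nra.
Qed.

Lemma log_gamma_term1_bound :
  Rabs (log_gamma_term 1 j x) <= (2 + 2 * R0) / INR j ^ 2.
Proof.
  cbn beta iota delta [log_gamma_term].
  replace (ln (1 + / INR j) - / (x + INR j)) with
    ((ln (1 + / INR j) - / INR j) + x / (INR j * (x + INR j))) by (field; lra).
  pose proof (ln_1p_sub_le _ Hinv_small) as B1.
  replace ((/ INR j) ^ 2) with (1 / INR j ^ 2) in B1 by (field; lra).
  assert (B2 : Rabs (x / (INR j * (x + INR j))) <= 2 * R0 / INR j ^ 2).
  { rewrite Rabs_div, (Rabs_right (INR j * _)) by nra.
    apply (Rmult_le_reg_r (INR j * (x + INR j))); [nra|].
    replace (Rabs x / (INR j * (x + INR j)) * (INR j * (x + INR j))) with (Rabs x) by (field; nra).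
    replace (2 * R0 / INR j ^ 2 * (INR j * (x + INR j))) with (2 * R0 * ((x + INR j) / INR j))
      by (field; lra).
    assert (/ 2 <= (x + INR j) / INR j).
    { apply (Rmult_le_reg_r (INR j)); [lra|]. field_simplify; lra. }
    nra. }
  eapply Rle_trans; [apply Rabs_triang|].
  replace ((2 + 2 * R0) / INR j ^ 2) with (2 * (1 / INR j ^ 2) + 2 * R0 / INR j ^ 2)
    by (field; lra).
  lra.
Qed.

Lemma log_gamma_termSS_bound k :
  Rabs (log_gamma_term (S (S k)) j x) <= 4 * INR (fact (S k)) / INR j ^ 2.
Proof.
  cbn beta iota delta [log_gamma_term].
  pose proof (INR_fact_lt_0 (S k)).
  set (u := / (x + INR j)).
  assert (Hu : 0 < u <= 2 / INR j).
  { split; [apply Rinv_0_lt_compat; lra|].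
    replace (2 / INR j) with (/ (INR j / 2)) by (field; lra).
    apply Rinv_le_contravar; lra. }
  assert (Hu1 : 2 / INR j <= 1).
  { apply (Rmult_le_reg_r (INR j)); [lra|]. field_simplify; lra. }
  rewrite !Rabs_mult, pow_1_abs, <- RPow_abs, Rabs_right, (Rabs_right u) by lra.
  assert (u ^ S (S k) <= u ^ 2).
  { replace (u ^ S (S k)) with (u ^ 2 * u ^ k) by (simpl; ring).
    rewrite <- (Rmult_1_r (u ^ 2)) at 2. apply Rmult_le_compat_l.
    - apply pow_le; lra.
    - rewrite <- (pow1 k). apply pow_incr. lra. }
  assert (u ^ 2 <= 4 / INR j ^ 2).
  { replace (4 / INR j ^ 2) with ((2 / INR j) ^ 2) by (field; lra). apply pow_incr. lra. }
  replace (4 * INR (fact (S k)) / INR j ^ 2) with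
    (1 * INR (fact (S k)) * (4 / INR j ^ 2)) by (field; lra).
  apply Rmult_le_compat_l; lra.
Qed.

End TermBounds.

Lemma log_gamma_term_bound k R0 : 1 <= R0 -> exists K, 0 <= K /\
  forall j x, 2 * R0 + 2 <= INR j -> Rabs x <= R0 ->
    Rabs (log_gamma_term k j x) <= K / INR j ^ 2.
Proof.
  intros HR0. destruct k as [|[|k]].
  - exists (2 * R0 + 2 * R0 ^ 2). split; [nra|]. intros. now apply log_gamma_term0_bound.
  - exists (2 + 2 * R0). split; [lra|]. intros. now apply log_gamma_term1_bound.
  - exists (4 * INR (fact (S k))). split; [pose proof (INR_fact_lt_0 (S k)); lra|].
    intros. now apply (log_gamma_termSS_bound R0).
Qed.

Lemma poles_at_positive_distance x0 : (forall n, x0 <> - INR n) ->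
  exists d, 0 < d /\ forall j, d <= Rabs (x0 + INR j).
Proof.
  intros H. destruct (INR_unbounded (Rabs x0 + 1)) as [N HN].
  assert (Hlow : exists d, 0 < d <= 1 /\ forall j, (j < N)%nat -> d <= Rabs (x0 + INR j)).
  { clear HN. induction N as [|N [d [Hd Hj]]].
    - exists 1. split; [lra | intros; lia].
    - assert (Hn : 0 < Rabs (x0 + INR N)) by (apply Rabs_pos_lt; intros E; apply (H N); lra).
      exists (Rmin d (Rabs (x0 + INR N))). split.
      + split; [now apply Rmin_glb_lt | pose proof (Rmin_l d (Rabs (x0 + INR N))); lra].
      + intros j Hj'. destruct (Nat.eq_dec j N) as [->|Hne]; [apply Rmin_r|].
        eapply Rle_trans; [apply Rmin_l | apply Hj; lia]. }
  destruct Hlow as [d [Hd Hj]]. exists d. split; [lra|]. intros j.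
  destruct (Compare_dec.le_lt_dec N j) as [Hle|Hlt]; [|now apply Hj].
  apply le_INR in Hle. pose proof (Rabs_le_between x0 _ (Rle_refl _)).
  rewrite Rabs_right by lra. lra.
Qed.

Lemma Boule_avoiding_poles x0 : (forall n, x0 <> - INR n) ->
  exists d : posreal, forall t j, Boule x0 d t -> 0 < (t + INR j) * (x0 + INR j).
Proof.
  intros H. destruct (poles_at_positive_distance x0 H) as [d [Hd Hj]].
  exists (mkposreal d Hd). intros t j Ht. unfold Boule in Ht. simpl in Ht.
  specialize (Hj j). apply Rabs_def2 in Ht.
  destruct (Rlt_or_le 0 (x0 + INR j)) as [Hp|Hn].
  - rewrite Rabs_right in Hj by lra. nra.
  - rewrite Rabs_left1 in Hj by lra. nra.
Qed.

Lemma Boule_open c (r : posreal) : open (Boule c r).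
Proof.
  intros x Hx. unfold Boule in Hx.
  assert (Hp : 0 < r - Rabs (x - c)) by lra.
  exists (mkposreal _ Hp). intros y Hy.
  change (Rabs (y - x) < r - Rabs (x - c)) in Hy.
  unfold Boule. replace (y - c) with ((y - x) + (x - c)) by ring.
  eapply Rle_lt_trans; [apply Rabs_triang | lra].
Qed.

Lemma poch_neq0 t n : (forall j, t + INR j <> 0) -> poch t n <> 0.
Proof.
  intros H. induction n as [|n IH]; [specialize (H O); simpl in *; lra|].
  apply Rmult_integral_contrapositive_currified; [exact IH | apply H].
Qed.

Lemma sign_poch_same t x0 n : (forall j, 0 < (t + INR j) * (x0 + INR j)) ->
  sign (poch t n) = sign (poch x0 n).
Proof.
  intros H.
  assert (Hs : forall j, sign (t + INR j) = sign (x0 + INR j)).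
  { intros j. specialize (H j). destruct (Rtotal_order (t + INR j) 0) as [Hn|[E|Hp]].
    - assert (x0 + INR j < 0) by nra. now rewrite !sign_eq_m1.
    - rewrite E in H. lra.
    - assert (0 < x0 + INR j) by nra. now rewrite !sign_eq_1. }
  induction n as [|n IH]; [specialize (Hs O); simpl in *; now rewrite !Rplus_0_r in Hs|].
  cbn [poch]. now rewrite !sign_mult, IH, Hs.
Qed.

Lemma sign_poch_stable x0 J n : (forall j, (J <= j)%nat -> 0 < x0 + INR j) ->
  (J <= n)%nat -> sign (poch x0 n) = sign (poch x0 J).
Proof.
  intros H Hn. induction Hn as [|n Hn IH]; [reflexivity|].
  cbn [poch]. rewrite sign_mult, IH, (sign_eq_1 (x0 + _)) by (apply H; lia). ring.
Qed.

Lemma ln_0 : ln 0 = 0.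
Proof.
  unfold ln. destruct (Rlt_dec 0 0) as [h|h]; [exfalso; exact (Rlt_irrefl 0 h) | reflexivity].
Qed.

Lemma log_gamma_partial0_closed t n : (forall j, t + INR j <> 0) ->
  log_gamma_partial O n t = t * ln (INR n + 1) - ln (Rabs (poch t n)) + ln (INR (fact n)).
Proof.
  intros H. unfold log_gamma_partial. induction n as [|n IH].
  - rewrite sum_O. cbn beta iota delta [log_gamma_term poch].
    change (INR 0) with 0. change (INR (fact 0)) with 1.
    rewrite Rinv_0, !Rplus_0_r, Rplus_0_l, ln_1, ln_0. Rring.
  - rewrite sum_Sn, IH. change (plus ?a ?b) with (a + b).
    cbn beta iota delta [log_gamma_term poch].
    fold (poch t n). rewrite Rabs_mult.
    assert (0 < Rabs (poch t n)) by (apply Rabs_pos_lt, poch_neq0, H).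
    assert (0 < Rabs (t + INR (S n))) by (apply Rabs_pos_lt, H).
    assert (0 < INR (S n)) by (apply lt_0_INR; lia).
    change (fact (S n)) with (S n * fact n)%nat.
    pose proof (INR_fact_lt_0 n). rewrite mult_INR, !ln_mult by lra.
    assert (0 < / INR (S n)) by (apply Rinv_0_lt_compat; lra).
    replace (INR (S n) + 1) with ((INR n + 1) * (1 + / INR (S n)))
      by (rewrite S_INR; field; pose proof (pos_INR n); lra).
    rewrite ln_mult by (pose proof (pos_INR n); lra).
    Rring.
Qed.

Lemma gauss_term_sign_exp t n : (forall j, t + INR j <> 0) -> (0 < n)%nat ->
  gauss_term t n =
    sign (poch t n) * exp (log_gamma_partial O n t + t * (ln (INR n) - ln (INR n + 1))).
Proof.
  intros H Hn. rewrite log_gamma_partial0_closed by exact H.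
  assert (Hp : poch t n <> 0) by (apply poch_neq0, H).
  assert (0 < Rabs (poch t n)) by (apply Rabs_pos_lt, Hp).
  assert (0 < INR n) by (apply lt_0_INR, Hn).
  pose proof (INR_fact_lt_0 n).
  replace (t * ln (INR n + 1) - ln (Rabs (poch t n)) + ln (INR (fact n)) +
      t * (ln (INR n) - ln (INR n + 1)))
    with (t * ln (INR n) + - ln (Rabs (poch t n)) + ln (INR (fact n))) by ring.
  rewrite !exp_plus, exp_Ropp, !exp_ln by lra.
  unfold gauss_term, Rpower.
  destruct (Rlt_or_le 0 (poch t n)).
  - rewrite sign_eq_1, Rabs_right by lra. field. lra.
  - rewrite sign_eq_m1, Rabs_left by lra. field. lra.
Qed.

Lemma is_lim_seq_ln_ratio : is_lim_seq (fun n => ln (INR n) - ln (INR n + 1)) 0.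
Proof.
  apply (is_lim_seq_ext_loc (fun n => - ln (1 + / INR n))).
  - exists 1%nat. intros n Hn. assert (0 < INR n) by (apply lt_0_INR; lia).
    replace (INR n + 1) with (INR n * (1 + / INR n)) by (field; lra).
    rewrite ln_mult; [ring | lra |].
    pose proof (Rinv_0_lt_compat _ H). lra.
  - replace (Finite 0) with (Finite (- ln (1 + 0))) by (rewrite Rplus_0_r, ln_1; f_equal; ring).
    apply (is_lim_seq_continuous (fun x => - ln x)).
    + apply (is_derive_continuity_pt _ _ (- / (1 + 0))). auto_derive; [lra | ring].
    + apply is_lim_seq_plus'; [apply is_lim_seq_const|].
      replace (Finite 0) with (Rbar_inv p_infty) by reflexivity.
      apply is_lim_seq_inv; [apply is_lim_seq_INR | discriminate].
Qed.

Definition log_gamma_tower (k : nat) (x : R) : R :=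
  real (Lim_seq (fun n => log_gamma_partial k n x)).

Section LogGammaOnBall.

Variables (c : R) (d : posreal).
Hypothesis Hpoles : forall t j, Boule c d t -> 0 < (t + INR j) * (c + INR j).

Let Hnonzero t j : Boule c d t -> t + INR j <> 0.
Proof. intros Ht E. specialize (Hpoles t j Ht). rewrite E in Hpoles. lra. Qed.

Lemma CVU_dom_log_gamma_partial k : CVU_dom (log_gamma_partial k) (Boule c d).
Proof.
  apply CVU_dom_cauchy.
  set (R0 := Rabs c + d + 1).
  assert (HR0 : 1 <= R0) by (pose proof (Rabs_pos c); pose proof (cond_pos d); unfold R0; lra).
  destruct (log_gamma_term_bound k R0 HR0) as [K [HK HKb]].
  destruct (INR_unbounded (2 * R0 + 2)) as [J HJ].
  apply (CVU_cauchy_inv_sqr_bound (log_gamma_term k) _ K J HK).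
  - destruct J; [simpl in HJ; lra | lia].
  - intros j x Hj Hx. apply HKb.
    + apply le_INR in Hj. lra.
    + pose proof (Boule_lt c d x Hx). unfold R0. lra.
Qed.

Lemma is_lim_seq_log_gamma_partial k x : Boule c d x ->
  is_lim_seq (fun n => log_gamma_partial k n x) (log_gamma_tower k x).
Proof.
  intros Hx. destruct (CVU_CVS_dom _ _ (CVU_dom_log_gamma_partial k) x Hx) as [l Hl].
  unfold log_gamma_tower. now rewrite (is_lim_seq_unique _ _ Hl).
Qed.

Lemma is_derive_tower_log_gamma : is_derive_tower log_gamma_tower (Boule c d).
Proof.
  intros k x Hx. apply is_derive_Reals.
  apply (CVU_derivable (log_gamma_partial k) (log_gamma_partial (S k))
    (log_gamma_tower k) (log_gamma_tower (S k)) c d).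
  - apply CVU_dom_Reals; [|apply CVU_dom_log_gamma_partial].
    intros y Hy. symmetry. apply is_lim_seq_unique, is_lim_seq_log_gamma_partial, Hy.
  - intros y Hy. apply is_lim_seq_Reals, is_lim_seq_log_gamma_partial, Hy.
  - intros n y Hy. apply is_derive_Reals, is_derive_log_gamma_partial.
    intros j. apply Hnonzero, Hy.
  - exact Hx.
Qed.

Lemma Gamma_sign_exp : exists s, (s = 1 \/ s = -1) /\
  forall t, Boule c d t -> Gamma t = s * exp (log_gamma_tower O t).
Proof.
  destruct (INR_unbounded (Rabs c)) as [J HJ].
  assert (Hc : Boule c d c) by apply Boule_center.
  assert (HcJ : forall j, (J <= j)%nat -> 0 < c + INR j).
  { intros j Hj. apply le_INR in Hj. pose proof (Rabs_le_between c _ (Rle_refl _)). lra. }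
  exists (sign (poch c J)). split.
  { destruct (Rlt_or_le 0 (poch c J)).
    - left. now apply sign_eq_1.
    - right. apply sign_eq_m1.
      assert (poch c J <> 0) by (apply poch_neq0; intros j; apply Hnonzero, Hc). lra. }
  intros t Ht. unfold Gamma.
  replace (sign (poch c J) * exp (log_gamma_tower O t))
    with (real (Rbar_mult (sign (poch c J)) (exp (log_gamma_tower O t + t * 0))))
    by (simpl; now rewrite Rmult_0_r, Rplus_0_r).
  f_equal. apply is_lim_seq_unique.
  apply (is_lim_seq_ext_loc (fun n => sign (poch c J) *
    exp (log_gamma_partial O n t + t * (ln (INR n) - ln (INR n + 1))))).
  - exists (S J). intros n Hn.
    rewrite gauss_term_sign_exp by (intros; apply Hnonzero, Ht || lia).
    rewrite (sign_poch_same t c n), (sign_poch_stable c J n);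
      [reflexivity | exact HcJ | lia | intros; apply Hpoles, Ht].
  - apply is_lim_seq_scal_l, (is_lim_seq_continuous exp).
    + apply (is_derive_continuity_pt _ _ (exp (log_gamma_tower O t + t * 0))), is_derive_exp.
    + apply is_lim_seq_plus'; [apply is_lim_seq_log_gamma_partial, Ht|].
      replace (Finite (t * 0)) with (Rbar_mult t 0) by reflexivity.
      apply is_lim_seq_scal_l, is_lim_seq_ln_ratio.
Qed.

End LogGammaOnBall.

Lemma Gamma_local_exp x0 : (forall n, x0 <> - INR n) ->
  exists (d : posreal) s, (s = 1 \/ s = -1) /\
    is_derive_tower log_gamma_tower (Boule x0 d) /\
    forall t, Boule x0 d t -> Gamma t = s * exp (log_gamma_tower O t).
Proof.
  intros H. destruct (Boule_avoiding_poles x0 H) as [d Hd].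
  destruct (Gamma_sign_exp x0 d Hd) as [s [Hs HG]].
  exists d, s. split; [exact Hs|]. split; [now apply is_derive_tower_log_gamma | exact HG].
Qed.

Lemma polygamma_log_gamma_tower n z : (forall j, z <> - INR j) ->
  polygamma n z = log_gamma_tower (S n) z.
Proof.
  intros Hz. destruct (Gamma_local_exp z Hz) as (d & s & Hs & HL & HG).
  unfold polygamma.
  rewrite (Derive_n_ext_loc _ (log_gamma_tower O)).
  - apply (Derive_n_tower _ _ (Boule_open z d) HL), Boule_center.
  - apply (locally_open (Boule z d)); [apply Boule_open | | apply Boule_center].
    intros t Ht. rewrite HG, Rabs_mult, (Rabs_right (exp _)) by (exact Ht || apply Rle_ge, Rlt_le, exp_pos).
    replace (Rabs s) with 1 by (destruct Hs as [-> | ->]; unfold Rabs; destruct Rcase_abs; lra).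
    now rewrite Rmult_1_l, ln_exp.
Qed.

Definition binom_log_tower (k : R) (n : nat) (t : R) : R :=
  2 ^ n * log_gamma_tower n (2 * t + 1)
  - log_gamma_tower n (t + (1 + k)) - log_gamma_tower n (t + (1 - k)).

Section BinomialViaGamma.

Variables (k m : R).
Hypotheses (H1 : forall n : nat, 2 * m + 1 <> - INR n)
  (H2 : forall n : nat, m + 1 + k <> - INR n)
  (H3 : forall n : nat, m + 1 - k <> - INR n).

Lemma binom_log_tower_Delta j : (1 <= j)%nat ->
  binom_log_tower k j m = (-1) ^ j * Delta_j k m j.
Proof.
  intros Hj. destruct j as [|j]; [lia|].
  unfold binom_log_tower, Delta_j. replace (S j - 1)%nat with j by lia.
  rewrite !polygamma_log_gamma_tower by assumption.
  replace (m + 1 + k) with (m + (1 + k)) by ring.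
  replace (m + 1 - k) with (m + (1 - k)) by ring.
  assert (Hsq : (-1) ^ S j * (-1) ^ S j = 1)
    by (rewrite <- Rpow_mult_distr; replace (-1 * -1) with 1 by ring; apply pow1).
  rewrite <- Rmult_assoc, Hsq. ring.
Qed.

Lemma Cfun_local_exp : exists (U : R -> Prop) s, open U /\ U m /\
  is_derive_tower (binom_log_tower k) U /\
  forall t, U t -> Cfun k t = s * exp (binom_log_tower k O t).
Proof.
  destruct (Gamma_local_exp _ H1) as (d1 & s1 & Hs1 & HD1 & HG1).
  destruct (Gamma_local_exp _ H2) as (d2 & s2 & Hs2 & HD2 & HG2).
  destruct (Gamma_local_exp _ H3) as (d3 & s3 & Hs3 & HD3 & HG3).
  assert (Hr : 0 < Rmin (d1 / 2) (Rmin d2 d3)).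
  { pose proof (cond_pos d1). pose proof (cond_pos d2). pose proof (cond_pos d3).
    repeat apply Rmin_glb_lt; lra. }
  set (U := Boule m (mkposreal _ Hr)).
  assert (HU : forall t, U t -> Boule (2 * m + 1) d1 (2 * t + 1) /\
    Boule (m + 1 + k) d2 (t + (1 + k)) /\ Boule (m + 1 - k) d3 (t + (1 - k))).
  { intros t Ht. unfold U, Boule in *. simpl in Ht.
    pose proof (Rmin_l (d1 / 2) (Rmin d2 d3)). pose proof (Rmin_r (d1 / 2) (Rmin d2 d3)).
    pose proof (Rmin_l d2 d3). pose proof (Rmin_r d2 d3).
    replace (2 * t + 1 - (2 * m + 1)) with (2 * (t - m)) by ring.
    replace (t + (1 + k) - (m + 1 + k)) with (t - m) by ring.
    replace (t + (1 - k) - (m + 1 - k)) with (t - m) by ring.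
    rewrite Rabs_mult, Rabs_right by lra. repeat split; lra. }
  exists U, (s1 * s2 * s3). split; [apply Boule_open|]. split; [apply Boule_center|]. split.
  - repeat apply is_derive_tower_minus.
    + apply (is_derive_tower_comp_affine _ _ _ 2 1 HD1). apply HU.
    + apply (is_derive_tower_comp_shift _ _ _ (1 + k) HD2). apply HU.
    + apply (is_derive_tower_comp_shift _ _ _ (1 - k) HD3). apply HU.
  - intros t Ht. destruct (HU t Ht) as (Hb1 & Hb2 & Hb3).
    unfold Cfun, binomR, binom_log_tower. simpl pow. rewrite Rmult_1_l.
    replace (t + k + 1) with (t + (1 + k)) by ring.
    replace (2 * t - (t + k) + 1) with (t + (1 - k)) by ring.
    rewrite (HG1 _ Hb1), (HG2 _ Hb2), (HG3 _ Hb3).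
    set (a := log_gamma_tower 0 (2 * t + 1)).
    set (b := log_gamma_tower 0 (t + (1 + k))).
    set (c := log_gamma_tower 0 (t + (1 - k))).
    replace (a - b - c) with (a + - b + - c) by ring. rewrite !exp_plus, !exp_Ropp.
    pose proof (exp_pos b). pose proof (exp_pos c).
    destruct Hs2 as [-> | ->], Hs3 as [-> | ->]; field; lra.
Qed.

End BinomialViaGamma.

Theorem theorem3 (k m : R) (p : nat)
  (H1 : forall n : nat, 2 * m + 1 <> - INR n)
  (H2 : forall n : nat, m + 1 + k <> - INR n)
  (H3 : forall n : nat, m + 1 - k <> - INR n) :
  Derive_n (Cfun k) p m =
    (-1) ^ p * binomR (2 * m) (m + k) *
    sum_n (fun i => Binomial.C p i * (Delta_j k m 1) ^ (p - i) * xseq (Delta_j k m) i) p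
  /\
  Derive_n (CLfun k) p m =
    (-1) ^ p * (binomR (2 * m) (m + k) / Rpower 4 m) *
    sum_n (fun i => Binomial.C p i * (Delta_j k m 1 + ln 4) ^ (p - i) * xseq (Delta_j k m) i) p.
Proof.
  destruct (Cfun_local_exp k m H1 H2 H3) as (U & s & HU & Hm & HL & HC).
  pose proof (binom_log_tower_Delta k m H1 H2 H3) as HLj.
  split.
  - apply (Derive_n_scaled_exp (Cfun k) s _ U m p _ _ HU Hm HL HC).
    + rewrite HLj by lia. ring.
    + intros j Hj. apply HLj. lia.
  - set (L := fun n t => binom_log_tower k n t - linear_tower (ln 4) 0 n t).
    apply (Derive_n_scaled_exp (CLfun k) s L U m p _ _ HU Hm).
    + apply is_derive_tower_minus; [exact HL | apply is_derive_tower_linear].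
    + intros t Ht. unfold CLfun, Rpower, L, linear_tower.
      change (binomR (2 * t) (t + k)) with (Cfun k t). rewrite HC by exact Ht.
      set (a := binom_log_tower k 0 t).
      replace (a - ln 4 * (t - 0)) with (a + - (t * ln 4)) by ring.
      rewrite exp_plus, exp_Ropp. field. apply Rgt_not_eq, exp_pos.
    + unfold L, linear_tower. rewrite HLj by lia. ring.
    + intros j Hj. unfold L, linear_tower. destruct j as [|[|j]]; try lia. rewrite HLj by lia. ring.
Qed.
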